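(* In the $1/4$-rebate Marshallian Match, the truthful strategy profile, in which every bidder $i$ bids $b_{ij}(t)=v_{ij}$ on every asker $j$ and every asker $j$ asks $a_{ji}(t)=c_{ji}$ on every bidder $i$ at all times, is $4$-ex post stable.
   Context: Bipartite setting: bidders $i$ and askers $j$; bidder $i$ has value $v_{ij}\in\mathbb R$ for matching asker $j$ and asker $j$ has cost $c_{ji}\in\mathbb R$ for matching bidder $i$; surplus $s_{ij}=v_{ij}-c_{ji}$. $1/4$-rebate Marshallian Match: a global price $p(t)$ decreases continuously with $p(0)=+\infty$, $p(1)=0$. Each unmatched bidder $i$ maintains a bid $b_{ij}(t)\in\mathbb R$ on each feasible asker $j$, and each unmatched asker $j$ an ask $a_{ji}(t)\in\mathbb R$ on each feasible bidder $i$. As soon as an unmatched pair satisfies $b_{ij}(t)-a_{ji}(t)\ge p(t)$, they are matched and leave; the bidder pays $b_{ij}$, the asker receives $a_{ji}$, and each receives a rebate of $(b_{ij}-a_{ji})/4$. So the bidder's utility is $v_{ij}-b_{ij}+(b_{ij}-a_{ji})/4$ and the asker's is $a_{ji}-c_{ji}+(b_{ij}-a_{ji})/4$; unmatched agents get utility $0$. $k$-ex post stability: a profile $(b,a)$ is $k$-ex post stable if for every realization of types and every feasible bidder–asker pair $(i,j)$, $u_i(b,a)+u_j(b,a)\ge \frac1k s_{ij}$. *)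

From Stdlib Require Import Reals Lra.
Open Scope R_scope.

(* Time runs over (0,1].  The global price p(t) is modelled on (0,1]:
   p(0) = +oo is expressed as "p t -> +oo as t -> 0+". *)
Definition price_path (p : R -> R) : Prop :=
  (forall t, 0 < t <= 1 ->
     forall eps, 0 < eps -> exists delta, 0 < delta /\
       forall s, 0 < s <= 1 -> Rabs (s - t) < delta -> Rabs (p s - p t) < eps) /\
  (forall s t, 0 < s <= 1 -> 0 < t <= 1 -> s < t -> p t < p s) /\
  (forall M, exists delta, 0 < delta /\ forall t, 0 < t < delta -> M < p t) /\
  p 1 = 0.

Definition bids (I J : Type) := I -> J -> R -> R.
Definition asks (I J : Type) := J -> I -> R -> R.

(* A (possible) run outcome of the Marshallian Match:
   mI i = Some (j, tau) : bidder i is matched to asker j at time tau;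
   mJ j = Some (i, tau) : symmetric record for askers; None = unmatched.
   Ties between simultaneously eligible pairs may be broken arbitrarily,
   so any outcome satisfying these rules is a possible run. *)
Definition mm_outcome {I J : Type} (E : I -> J -> Prop) (p : R -> R)
  (b : bids I J) (a : asks I J)
  (mI : I -> option (J * R)) (mJ : J -> option (I * R)) : Prop :=
  (forall i j tau, mI i = Some (j, tau) <-> mJ j = Some (i, tau)) /\
  (forall i j tau, mI i = Some (j, tau) ->
     E i j /\ 0 < tau <= 1 /\ b i j tau - a j i tau >= p tau) /\
  (* "as soon as": whenever a feasible pair's spread reaches the price at
     time t, at least one of the two has left (been matched) by time t *)
  (forall i j t, E i j -> 0 < t <= 1 -> b i j t - a j i t >= p t ->
     (exists j' tau, mI i = Some (j', tau) /\ tau <= t) \/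
     (exists i' tau, mJ j = Some (i', tau) /\ tau <= t)).

Definition bidder_util {I J : Type} (v : I -> J -> R) (b : bids I J) (a : asks I J)
  (mI : I -> option (J * R)) (i : I) : R :=
  match mI i with
  | Some (j, tau) => v i j - b i j tau + (b i j tau - a j i tau) / 4
  | None => 0
  end.

Definition asker_util {I J : Type} (c : J -> I -> R) (b : bids I J) (a : asks I J)
  (mJ : J -> option (I * R)) (j : J) : R :=
  match mJ j with
  | Some (i, tau) => a j i tau - c j i + (b i j tau - a j i tau) / 4
  | None => 0
  end.

Definition bid_profile (I J : Type) := (I -> J -> R) -> (J -> I -> R) -> bids I J.
Definition ask_profile (I J : Type) := (I -> J -> R) -> (J -> I -> R) -> asks I J.

Definition truthful_bids {I J : Type} : bid_profile I J := fun v c i j t => v i j.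
Definition truthful_asks {I J : Type} : ask_profile I J := fun v c j i t => c j i.

Definition ex_post_stable {I J : Type} (E : I -> J -> Prop) (k : R)
  (sb : bid_profile I J) (sa : ask_profile I J) : Prop :=
  forall (p : R -> R) (v : I -> J -> R) (c : J -> I -> R)
         (mI : I -> option (J * R)) (mJ : J -> option (I * R)),
    price_path p ->
    mm_outcome E p (sb v c) (sa v c) mI mJ ->
    forall i j, E i j ->
      bidder_util v (sb v c) (sa v c) mI i + asker_util c (sb v c) (sa v c) mJ j
        >= (v i j - c j i) / k.

(* Under truthful reporting a matched agent's utility is a quarter of the
   surplus of its own pair, and that surplus is at least the price at which
   the pair left.  For a feasible pair (i, j), look at the first time m at
   which i or j leaves (m = 1 if neither does).  The price is continuous and
   the match reacts "as soon as" a spread reaches the price, so p m < s_ij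
   would force one of them to leave strictly before m.  Hence s_ij <= p m, and
   the agent leaving at m alone already secures p m / 4 >= s_ij / 4, while
   utilities are never negative because prices are. *)

From Stdlib Require Import Reals Lra.
Open Scope R_scope.

Lemma price_path_ge0 (p : R -> R) :
  price_path p -> forall t, 0 < t <= 1 -> 0 <= p t.
Proof.
  intros [_ [Hdec [_ Hp1]]] t Ht.
  destruct (Req_dec t 1) as [-> | Ht1]; [lra |].
  assert (p 1 < p t) by (apply Hdec; lra).
  lra.
Qed.

Lemma price_path_lt_before (p : R -> R) (s m : R) :
  price_path p -> 0 < m <= 1 -> p m < s -> exists t, 0 < t < m /\ p t < s.
Proof.
  intros [Hcont _] Hm Hlt.
  destruct (Hcont m Hm (s - p m)) as [d [Hd Hnear]]; [lra |].
  set (t := Rmax (m / 2) (m - d / 2)).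
  assert (m / 2 <= t) by apply Rmax_l.
  assert (m - d / 2 <= t) by apply Rmax_r.
  assert (t < m) by (unfold t; apply Rmax_lub_lt; lra).
  exists t; split; [lra |].
  assert (Hdist : Rabs (p t - p m) < s - p m)
    by (apply Hnear; [lra | rewrite Rabs_left; lra]).
  apply Rabs_def2 in Hdist.
  lra.
Qed.

Section Outcome.

Context {I J : Type} {E : I -> J -> Prop} {p : R -> R}.
Context {b : bids I J} {a : asks I J}.
Context {mI : I -> option (J * R)} {mJ : J -> option (I * R)}.
Hypothesis price : price_path p.
Hypothesis outcome : mm_outcome E p b a mI mJ.

Lemma bidder_match_spread_ge_price i j tau :
  mI i = Some (j, tau) -> 0 < tau <= 1 /\ p tau <= b i j tau - a j i tau.
Proof.
  intros Hm.
  destruct outcome as [_ [Hrule _]].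
  destruct (Hrule i j tau Hm) as [_ [Htau Hspread]].
  split; [exact Htau | lra].
Qed.

Lemma asker_match_spread_ge_price i j tau :
  mJ j = Some (i, tau) -> 0 < tau <= 1 /\ p tau <= b i j tau - a j i tau.
Proof.
  intros Hm.
  apply bidder_match_spread_ge_price.
  destruct outcome as [Hcons _].
  exact (proj2 (Hcons i j tau) Hm).
Qed.

Lemma spread_le_price_at_first_departure i j s m :
  E i j -> (forall t, s <= b i j t - a j i t) -> 0 < m <= 1 ->
  (forall j' tau, mI i = Some (j', tau) -> m <= tau) ->
  (forall i' tau, mJ j = Some (i', tau) -> m <= tau) ->
  s <= p m.
Proof.
  intros Hij Hs Hm Hi Hj.
  destruct (Rle_or_lt s (p m)) as [Hle | Hlt]; [exact Hle | exfalso].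
  destruct (price_path_lt_before p s m price Hm Hlt) as [t [Ht Hpt]].
  destruct outcome as [_ [_ Hsoon]].
  assert (Hreach : b i j t - a j i t >= p t) by (specialize (Hs t); lra).
  destruct (Hsoon i j t Hij ltac:(lra) Hreach)
    as [[j' [tau [Hm' Hle]]] | [i' [tau [Hm' Hle]]]].
  - specialize (Hi j' tau Hm'); lra.
  - specialize (Hj i' tau Hm'); lra.
Qed.

End Outcome.

Section Truthful.

Context {I J : Type} {E : I -> J -> Prop} {p : R -> R}.
Context {v : I -> J -> R} {c : J -> I -> R}.
Context {mI : I -> option (J * R)} {mJ : J -> option (I * R)}.
Hypothesis price : price_path p.
Hypothesis outcome :
  mm_outcome E p (truthful_bids v c) (truthful_asks v c) mI mJ.

Let u_bidder := bidder_util v (truthful_bids v c) (truthful_asks v c) mI.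
Let u_asker := asker_util c (truthful_bids v c) (truthful_asks v c) mJ.

Lemma truthful_bidder_util_ge_price i j tau :
  mI i = Some (j, tau) -> p tau / 4 <= u_bidder i.
Proof.
  intros Hm.
  destruct (bidder_match_spread_ge_price outcome i j tau Hm) as [_ Hspread].
  unfold u_bidder, bidder_util, truthful_bids, truthful_asks in *.
  rewrite Hm; lra.
Qed.

Lemma truthful_asker_util_ge_price i j tau :
  mJ j = Some (i, tau) -> p tau / 4 <= u_asker j.
Proof.
  intros Hm.
  destruct (asker_match_spread_ge_price outcome i j tau Hm) as [_ Hspread].
  unfold u_asker, asker_util, truthful_bids, truthful_asks in *.
  rewrite Hm; lra.
Qed.

Lemma truthful_bidder_util_ge0 i : 0 <= u_bidder i.
Proof.
  destruct (mI i) as [[j tau] |] eqn:Hm; [| unfold u_bidder, bidder_util; rewrite Hm; lra].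
  pose proof (truthful_bidder_util_ge_price i j tau Hm).
  destruct (bidder_match_spread_ge_price outcome i j tau Hm) as [Htau _].
  pose proof (price_path_ge0 p price tau Htau).
  lra.
Qed.

Lemma truthful_asker_util_ge0 j : 0 <= u_asker j.
Proof.
  destruct (mJ j) as [[i tau] |] eqn:Hm; [| unfold u_asker, asker_util; rewrite Hm; lra].
  pose proof (truthful_asker_util_ge_price i j tau Hm).
  destruct (asker_match_spread_ge_price outcome i j tau Hm) as [Htau _].
  pose proof (price_path_ge0 p price tau Htau).
  lra.
Qed.

Lemma truthful_surplus_le_price_at_first_departure i j m :
  E i j -> 0 < m <= 1 ->
  (forall j' tau, mI i = Some (j', tau) -> m <= tau) ->
  (forall i' tau, mJ j = Some (i', tau) -> m <= tau) ->
  v i j - c j i <= p m.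
Proof.
  intros Hij.
  apply (spread_le_price_at_first_departure price outcome);
    [exact Hij | intros t; unfold truthful_bids, truthful_asks; lra].
Qed.

Lemma truthful_bidder_leaving_first_secures_quarter i j j1 t1 :
  E i j -> mI i = Some (j1, t1) ->
  (forall i' tau, mJ j = Some (i', tau) -> t1 <= tau) ->
  (v i j - c j i) / 4 <= u_bidder i.
Proof.
  intros Hij Hm Hj.
  pose proof (truthful_bidder_util_ge_price i j1 t1 Hm).
  destruct (bidder_match_spread_ge_price outcome i j1 t1 Hm) as [Ht1 _].
  assert (v i j - c j i <= p t1).
  { apply truthful_surplus_le_price_at_first_departure; [exact Hij | exact Ht1 | | exact Hj].
    intros j' tau Hm'; rewrite Hm in Hm'; injection Hm'; lra. }
  lra.
Qed.

Lemma truthful_asker_leaving_first_secures_quarter i j i2 t2 :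
  E i j -> mJ j = Some (i2, t2) ->
  (forall j' tau, mI i = Some (j', tau) -> t2 <= tau) ->
  (v i j - c j i) / 4 <= u_asker j.
Proof.
  intros Hij Hm Hi.
  pose proof (truthful_asker_util_ge_price i2 j t2 Hm).
  destruct (asker_match_spread_ge_price outcome i2 j t2 Hm) as [Ht2 _].
  assert (v i j - c j i <= p t2).
  { apply truthful_surplus_le_price_at_first_departure; [exact Hij | exact Ht2 | exact Hi |].
    intros i' tau Hm'; rewrite Hm in Hm'; injection Hm'; lra. }
  lra.
Qed.

Lemma truthful_unmatched_pair_surplus_le0 i j :
  E i j -> mI i = None -> mJ j = None -> v i j - c j i <= 0.
Proof.
  intros Hij Hi Hj.
  assert (v i j - c j i <= p 1).
  { apply truthful_surplus_le_price_at_first_departure; [exact Hij | lra | |];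
      intros ? ?; [rewrite Hi | rewrite Hj]; discriminate. }
  destruct price as [_ [_ [_ Hp1]]].
  lra.
Qed.

Lemma truthful_pair_util_ge_quarter_surplus i j :
  E i j -> (v i j - c j i) / 4 <= u_bidder i + u_asker j.
Proof.
  intros Hij.
  pose proof (truthful_bidder_util_ge0 i).
  pose proof (truthful_asker_util_ge0 j).
  destruct (mI i) as [[j1 t1] |] eqn:Hi; destruct (mJ j) as [[i2 t2] |] eqn:Hj.
  - destruct (Rle_or_lt t1 t2).
    + enough ((v i j - c j i) / 4 <= u_bidder i) by lra.
      apply (truthful_bidder_leaving_first_secures_quarter i j j1 t1 Hij Hi).
      intros i' tau Hm; rewrite Hj in Hm; injection Hm; lra.
    + enough ((v i j - c j i) / 4 <= u_asker j) by lra.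
      apply (truthful_asker_leaving_first_secures_quarter i j i2 t2 Hij Hj).
      intros j' tau Hm; rewrite Hi in Hm; injection Hm; lra.
  - enough ((v i j - c j i) / 4 <= u_bidder i) by lra.
    apply (truthful_bidder_leaving_first_secures_quarter i j j1 t1 Hij Hi).
    intros i' tau Hm; rewrite Hj in Hm; discriminate.
  - enough ((v i j - c j i) / 4 <= u_asker j) by lra.
    apply (truthful_asker_leaving_first_secures_quarter i j i2 t2 Hij Hj).
    intros j' tau Hm; rewrite Hi in Hm; discriminate.
  - pose proof (truthful_unmatched_pair_surplus_le0 i j Hij Hi Hj).
    lra.
Qed.

End Truthful.

Theorem mainTheorem11 (I J : Type) (E : I -> J -> Prop) :
  ex_post_stable E 4 (@truthful_bids I J) (@truthful_asks I J).
Proof.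
  intros p v c mI mJ price outcome i j Hij.
  apply Rle_ge.
  exact (truthful_pair_util_ge_quarter_surplus price outcome i j Hij).
Qed.
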